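(* Let $\theta$ be the Euler operator $\theta f(x)=xf'(x)$ on $\mathscr{A}(\mathbb{R})$ and let $P(\theta)=\sum_{k=0}^K a_k\theta^k$ with $a_0,\dots,a_K\in\mathbb{C}$ be a differential operator of degree $K\geq 2$ (i.e. $a_K\neq 0$). Then $P(\theta)$ does not generate a $C_0$-semigroup on $\mathscr{A}(\mathbb{R})$ in each of the following cases: (1) $\operatorname{Re}a_K=\dots=\operatorname{Re}a_{l+1}=0$ and $\operatorname{Re}a_l>0$ for some $l\geq 2$; (2) $a_K,\dots,a_2\in i\mathbb{Q}$.
   Context: $\mathscr{A}(\mathbb{R})$ denotes the space of real analytic functions on $\mathbb{R}$ with the inductive limit topology $\operatorname{ind}_{U\supset\mathbb{R}}H(U)$ ($U$ complex open neighbourhoods of $\mathbb{R}$, $H(U)$ with compact-open topology). A $C_0$-semigroup is a family $(T_t)_{t\ge0}$ of continuous linear operators on $\mathscr{A}(\mathbb{R})$ with $T_tT_s=T_{t+s}$, $T_0=I$, and $t\mapsto T_tf$ continuous for each $f$; its generator is $Af=\lim_{t\to0^+}(T_tf-f)/t$ on the domain where the limit exists; ''$P(\theta)$ generates'' means $P(\theta)$ (with domain $\mathscr{A}(\mathbb{R})$) is the generator. $\theta^0$ is the identity. *)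

From Stdlib Require Import Reals QArith List.
From Coquelicot Require Import Coquelicot.

Local Open Scope R_scope.

Notation CC := Complex.C.

Definition fadd (f g : R -> CC) : R -> CC := fun x => Cplus (f x) (g x).
Definition fsub (f g : R -> CC) : R -> CC := fun x => Cminus (f x) (g x).
Definition fscal (c : CC) (f : R -> CC) : R -> CC := fun x => Cmult c (f x).

Definition nbhdR (U : CC -> Prop) : Prop :=
  @open C_UniformSpace U /\ forall x : R, U (RtoC x).

Definition holo_on (U : CC -> Prop) (F : CC -> CC) : Prop :=
  forall z, U z -> @ex_derive C_AbsRing C_NormedModule F z.

Definition compactC (K : CC -> Prop) : Prop :=
  forall (I : Type) (O : I -> CC -> Prop),
    (forall i, @open C_UniformSpace (O i)) ->
    (forall z, K z -> exists i, O i z) ->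
    exists l : list I, forall z, K z -> exists i, In i l /\ O i z.

Definition real_analytic (f : R -> CC) : Prop :=
  exists U F, nbhdR U /\ holo_on U F /\ forall x : R, F (RtoC x) = f x.

(* ---------- topology of A(R) = ind_{U > R} H(U) (locally convex inductive
   limit).  Its continuous seminorms are exactly the seminorms on A(R) whose
   restriction to every step H(U) (compact-open topology) is continuous. *)
Definition seminormA (p : (R -> CC) -> R) : Prop :=
  (forall f g, real_analytic f -> real_analytic g ->
     p (fadd f g) <= p f + p g) /\
  (forall c f, real_analytic f -> p (fscal c f) = Cmod c * p f).

Definition cont_seminormA (p : (R -> CC) -> R) : Prop :=
  seminormA p /\
  forall U, nbhdR U ->
    exists (K : CC -> Prop) (M : R),
      compactC K /\ (forall z, K z -> U z) /\ 0 <= M /\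
      forall F, holo_on U F ->
        forall s, (forall z, K z -> Cmod (F z) <= s) ->
          p (fun x => F (RtoC x)) <= M * s.

Definition opA := (R -> CC) -> (R -> CC).

Definition cont_linear_opA (T : opA) : Prop :=
  (forall f, real_analytic f -> real_analytic (T f)) /\
  (forall f g, real_analytic f -> real_analytic g ->
     forall x, T (fadd f g) x = fadd (T f) (T g) x) /\
  (forall c f, real_analytic f -> forall x, T (fscal c f) x = fscal c (T f) x) /\
  (forall q, cont_seminormA q -> cont_seminormA (fun f => q (T f))).

Definition C0_semigroup (T : R -> opA) : Prop :=
  (forall t, 0 <= t -> cont_linear_opA (T t)) /\
  (forall t s, 0 <= t -> 0 <= s -> forall f, real_analytic f ->
     forall x, T t (T s f) x = T (t + s) f x) /\
  (forall f, real_analytic f -> forall x, T 0 f x = f x) /\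
  (forall f, real_analytic f -> forall t0, 0 <= t0 ->
     forall p, cont_seminormA p -> forall eps, 0 < eps ->
       exists delta, 0 < delta /\
         forall t, 0 <= t -> Rabs (t - t0) < delta ->
           p (fsub (T t f) (T t0 f)) < eps).

Definition generates (A : opA) (T : R -> opA) : Prop :=
  forall f, real_analytic f ->
    forall p, cont_seminormA p -> forall eps, 0 < eps ->
      exists delta, 0 < delta /\
        forall t, 0 < t -> t < delta ->
          p (fsub (fscal (RtoC (/ t)) (fsub (T t f) f)) (A f)) < eps.

Definition derivC (f : R -> CC) : R -> CC :=
  fun x => (Derive (fun y => Re (f y)) x, Derive (fun y => Im (f y)) x).

Definition theta (f : R -> CC) : R -> CC :=
  fun x => Cmult (RtoC x) (derivC f x).

Definition Ptheta (a : nat -> CC) (K : nat) : opA :=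
  fun f x => @sum_n C_AbelianMonoid (fun k => Cmult (a k) (Nat.iter k theta f x)) K.

(* Suppose P(theta) generates (T_t). Since theta x^k = k x^k, the orbit t |-> (T_t x^k)(x0) is
   continuous and right-differentiable with derivative P(k) (T_t x^k)(x0), so it equals
   e^(t P(k)) x0^k.

   In case (1), the seminorm f |-> |(T_1 f)(1)| is continuous on A(R), hence bounded by
   M sup_K |F| for a compact K in C; on F = z^k this gives e^(Re P(k)) <= M r^k, while
   Re P(k) grows like k^l with l >= 2.

   In case (2), P(k) = a_0 + a_1 k + i Q(k) with Q of degree >= 2 and rational coefficients.
   For a suitable t the phase k |-> e^(i t Q(k)) is N-periodic, and the discrete Fourier
   transform writes (T_t p)(x0) = sum_j c_j p(w_j) for every polynomial p, with nodes
   w_j = e^(t a_1) zeta^j x0. If every node with c_j <> 0 were real, zeta^(2j) would be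
   constant on them and the phase would satisfy chi(k+2) chi(0) = chi(2) chi(k); t is chosen
   to violate this, so some weighted node w lies off R. Polynomials peaking at w relative to
   a thin strip around R then contradict continuity of p |-> (T_t p)(x0) on A(R). *)

From Stdlib Require Import Reals RList Qreals Lra Lia ZArith List.
From Stdlib Require Import Classical FunctionalExtensionality.
From Coquelicot Require Import Coquelicot.
Local Open Scope R_scope.

Local Notation sumC := (@sum_n C_AbelianMonoid).
Local Notation sumR := (@sum_n R_AbelianMonoid).

(* [sumC] lands in [AbelianMonoid.sort C_AbelianMonoid], which [ring] and [field] do not
   recognise as [CC] until the goal is retyped. *)
Ltac eq_CC := match goal with |- @eq _ ?x ?y => change (@eq CC x y) end.

Lemma C_ext (z w : CC) : Re z = Re w -> Im z = Im w -> z = w.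
Proof. destruct z, w; simpl; intros -> ->; reflexivity. Qed.

Lemma Cmod_le_abs_Re_Im (z : CC) : Cmod z <= Rabs (Re z) + Rabs (Im z).
Proof.
  pose proof (Rabs_pos (Re z)); pose proof (Rabs_pos (Im z)).
  rewrite <- (sqrt_pow2 (Rabs (Re z) + Rabs (Im z))) by lra.
  apply sqrt_le_1_alt.
  rewrite <- (pow2_abs (fst z)), <- (pow2_abs (snd z)); unfold Re, Im in *; nra.
Qed.

Lemma Cmod_mult_sub_le (a b a0 b0 : CC) :
  Cmod (a * b - a0 * b0) <=
    Cmod (a - a0) * Cmod (b - b0) + Cmod a0 * Cmod (b - b0) + Cmod (a - a0) * Cmod b0.
Proof.
  replace (a * b - a0 * b0)%C with ((a - a0) * (b - b0) + a0 * (b - b0) + (a - a0) * b0)%C by ring.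
  rewrite <- !Cmod_mult; eapply Rle_trans; [apply Cmod_triangle|].
  apply Rplus_le_compat_r, Cmod_triangle.
Qed.

Lemma Cmod_sub_le_triangle (x y z : CC) : Cmod (x - z) <= Cmod (x - y) + Cmod (y - z).
Proof. replace (x - z)%C with ((x - y) + (y - z))%C by ring; apply Cmod_triangle. Qed.

Lemma abs_Im_le_Cmod (z : CC) : Rabs (Im z) <= Cmod z.
Proof. eapply Rle_trans; [apply Rmax_r|apply Rmax_Cmod]. Qed.

Lemma sumC_ext (f g : nat -> CC) (n : nat) :
  (forall j, (j <= n)%nat -> f j = g j) -> sumC f n = sumC g n.
Proof. apply sum_n_ext_loc. Qed.

Lemma sumC_mult_l (c : CC) (f : nat -> CC) (n : nat) : sumC (fun j => c * f j)%C n = (c * sumC f n)%C.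
Proof. apply (sum_n_mult_l (K := C_Ring)). Qed.

Lemma sumC_mult_r (c : CC) (f : nat -> CC) (n : nat) : sumC (fun j => f j * c)%C n = (sumC f n * c)%C.
Proof. apply (sum_n_mult_r (K := C_Ring)). Qed.

Lemma sumC_plus (f g : nat -> CC) (n : nat) : sumC (fun j => f j + g j)%C n = (sumC f n + sumC g n)%C.
Proof. apply (sum_n_plus (G := C_AbelianMonoid)). Qed.

Lemma sumC_Sn (f : nat -> CC) (n : nat) : sumC f (S n) = (sumC f n + f (S n))%C.
Proof. exact (sum_Sn _ n). Qed.

Lemma sumR_ext (f g : nat -> R) (n : nat) :
  (forall j, (j <= n)%nat -> f j = g j) -> sumR f n = sumR g n.
Proof. apply sum_n_ext_loc. Qed.

Lemma sumR_mult_l (c : R) (f : nat -> R) (n : nat) : sumR (fun j => c * f j) n = c * sumR f n.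
Proof. apply (sum_n_mult_l (K := R_Ring)). Qed.

Lemma sumR_Sn (f : nat -> R) (n : nat) : sumR f (S n) = sumR f n + f (S n).
Proof. exact (sum_Sn _ n). Qed.

Lemma Re_sumC (f : nat -> CC) (n : nat) : Re (sumC f n) = sumR (fun j => Re (f j)) n.
Proof.
  induction n as [|n IH]; [rewrite !sum_O; reflexivity|].
  rewrite sumC_Sn, sumR_Sn, <- IH; reflexivity.
Qed.

Lemma Im_sumC (f : nat -> CC) (n : nat) : Im (sumC f n) = sumR (fun j => Im (f j)) n.
Proof.
  induction n as [|n IH]; [rewrite !sum_O; reflexivity|].
  rewrite sumC_Sn, sumR_Sn, <- IH; reflexivity.
Qed.

Definition cexp (z : CC) : CC := (exp (Re z) * cos (Im z), exp (Re z) * sin (Im z)).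

Lemma cexp_add (z w : CC) : cexp (z + w) = (cexp z * cexp w)%C.
Proof.
  destruct z as [x y], w as [u v]; unfold cexp; apply C_ext; simpl; rewrite exp_plus.
  - rewrite cos_plus; ring.
  - rewrite sin_plus; ring.
Qed.

Lemma cexp_0 : cexp 0 = 1.
Proof. unfold cexp; apply C_ext; simpl; rewrite exp_0, ?cos_0, ?sin_0; ring. Qed.

Lemma Cmod_cexp (z : CC) : Cmod (cexp z) = exp (Re z).
Proof.
  transitivity (sqrt (exp (Re z) ^ 2)); [|apply sqrt_pow2; left; apply exp_pos].
  unfold Cmod, cexp; simpl fst; simpl snd; f_equal.
  pose proof (sin2_cos2 (Im z)) as H; unfold Rsqr in H.
  transitivity (exp (Re z) ^ 2 * (sin (Im z) * sin (Im z) + cos (Im z) * cos (Im z))); [ring|].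
  rewrite H; ring.
Qed.

Lemma cexp_neq0 (z : CC) : cexp z <> 0.
Proof. apply Cmod_gt_0; rewrite Cmod_cexp; apply exp_pos. Qed.

Lemma cexp_natmul (n : nat) (z : CC) : cexp (INR n * z) = (cexp z ^ n)%C.
Proof.
  induction n as [|n IH].
  - rewrite Cmult_0_l; apply cexp_0.
  - rewrite S_INR, Cpow_S, <- IH, <- cexp_add; f_equal.
    destruct z; apply C_ext; simpl; ring.
Qed.

Lemma cexp_2PI_int (k : Z) : cexp (0, 2 * PI * IZR k) = 1.
Proof.
  assert (Hs : sin (PI * IZR k) = 0) by (apply sin_eq_0_1; exists k; ring).
  replace (2 * PI * IZR k) with (2 * (PI * IZR k)) by ring.
  unfold cexp; apply C_ext; simpl; rewrite exp_0, ?sin_2a, ?cos_2a_sin, Hs; ring.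
Qed.

Lemma cexp_i_eq1 (x : R) : cexp (0, x) = 1 -> exists k : Z, x = 2 * PI * IZR k.
Proof.
  unfold cexp; simpl; rewrite exp_0; intros [= Hc _].
  replace x with (2 * (x / 2)) in Hc by field.
  rewrite cos_2a_sin in Hc.
  assert (Hs : sin (x / 2) = 0) by nra.
  destruct (sin_eq_0_0 _ Hs) as [k Hk]; exists k; lra.
Qed.

Lemma cexp_eq_mult_inv (x y u v : CC) :
  (cexp x * cexp y = cexp u * cexp v)%C -> cexp (x + y - u - v) = 1.
Proof.
  intros H.
  pose proof (cexp_neq0 u); pose proof (cexp_neq0 v).
  assert (Hsplit : (cexp (x + y - u - v) * (cexp u * cexp v))%C = (cexp x * cexp y)%C).
  { rewrite <- !cexp_add; f_equal; ring. }
  rewrite H in Hsplit.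
  transitivity (cexp (x + y - u - v) * (cexp u * cexp v) / (cexp u * cexp v))%C; [field; auto|].
  rewrite Hsplit; field; auto.
Qed.

(** * One-sided differential calculus on [0, +oo) *)

Definition is_rderive (f : R -> CC) (s : R) (l : CC) : Prop :=
  forall eps, 0 < eps -> exists delta, 0 < delta /\
    forall h, 0 < h < delta -> Cmod (f (s + h) - f s - h * l) <= eps * h.

Definition continuous_nonneg (f : R -> CC) : Prop :=
  forall t0, 0 <= t0 -> forall eps, 0 < eps -> exists delta, 0 < delta /\
    forall t, 0 <= t -> Rabs (t - t0) < delta -> Cmod (f t - f t0) < eps.

Lemma is_rderive_components (f : R -> CC) (s : R) (l : CC) :
  is_derive (fun x => Re (f x)) s (Re l) -> is_derive (fun x => Im (f x)) s (Im l) ->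
  is_rderive f s l.
Proof.
  intros Hre Him eps Heps.
  apply is_derive_Reals in Hre; apply is_derive_Reals in Him.
  destruct (Hre (eps / 2)) as [d1 Hd1]; [lra|].
  destruct (Him (eps / 2)) as [d2 Hd2]; [lra|].
  exists (Rmin d1 d2); split; [apply Rmin_glb_lt; apply cond_pos|].
  intros h [Hh Hhd].
  pose proof (Rmin_l d1 d2); pose proof (Rmin_r d1 d2).
  assert (Hh1 : Rabs h < d1) by (rewrite Rabs_right; lra).
  assert (Hh2 : Rabs h < d2) by (rewrite Rabs_right; lra).
  specialize (Hd1 h ltac:(lra) Hh1); specialize (Hd2 h ltac:(lra) Hh2).
  eapply Rle_trans; [apply Cmod_le_abs_Re_Im|].
  replace (Re (f (s + h)%R - f s - h * l)%C) with (h * ((Re (f (s + h)) - Re (f s)) / h - Re l))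
    by (simpl; unfold Re; field; lra).
  replace (Im (f (s + h)%R - f s - h * l)%C) with (h * ((Im (f (s + h)) - Im (f s)) / h - Im l))
    by (simpl; unfold Im; field; lra).
  rewrite !Rabs_mult, Rabs_right by lra; nra.
Qed.

Lemma continuous_nonneg_components (f : R -> CC) :
  (forall x, ex_derive (fun y => Re (f y)) x) -> (forall x, ex_derive (fun y => Im (f y)) x) ->
  continuous_nonneg f.
Proof.
  assert (Hcont : forall (g : R -> R) x, ex_derive g x -> forall eps, 0 < eps ->
    exists delta, 0 < delta /\ forall y, Rabs (y - x) < delta -> Rabs (g y - g x) < eps).
  { intros g x Hd eps Heps; apply ex_derive_continuous in Hd.
    destruct (proj1 (filterlim_locally g (g x)) Hd (mkposreal eps Heps)) as [d Hdd].
    exists d; split; [apply cond_pos|]; intros y Hy; apply (Hdd y Hy). }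
  intros Hre Him t0 _ eps Heps.
  destruct (Hcont _ t0 (Hre t0) (eps / 2)) as [d1 [Hd1 H1]]; [lra|].
  destruct (Hcont _ t0 (Him t0) (eps / 2)) as [d2 [Hd2 H2]]; [lra|].
  exists (Rmin d1 d2); split; [apply Rmin_glb_lt; auto|].
  intros t _ Ht.
  specialize (H1 t (Rlt_le_trans _ _ _ Ht (Rmin_l _ _))).
  specialize (H2 t (Rlt_le_trans _ _ _ Ht (Rmin_r _ _))).
  eapply Rle_lt_trans; [apply Cmod_le_abs_Re_Im|].
  change (Re (f t - f t0)%C) with (Re (f t) - Re (f t0)).
  change (Im (f t - f t0)%C) with (Im (f t) - Im (f t0)); lra.
Qed.

Lemma is_rderive_cexp (w : CC) (s : R) : is_rderive (fun x => cexp (x * w)) s (w * cexp (s * w)).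
Proof.
  destruct w as [u v]; apply is_rderive_components; unfold cexp; simpl.
  - auto_derive; auto; unfold Rminus; ring.
  - auto_derive; auto; unfold Rminus; ring.
Qed.

Lemma continuous_nonneg_cexp (w : CC) : continuous_nonneg (fun x => cexp (x * w)).
Proof.
  destruct w as [u v]; apply continuous_nonneg_components; intros x; unfold cexp; simpl;
    auto_derive; auto.
Qed.

Lemma small_factor (eps C : R) : 0 < eps -> 0 < C -> exists eta, 0 < eta <= 1 /\ eta * C <= eps.
Proof.
  intros Heps HC; exists (Rmin 1 (eps / C)).
  split; [split; [apply Rmin_glb_lt; [lra|apply Rdiv_lt_0_compat; lra]|apply Rmin_l]|].
  apply (Rmult_le_reg_r (/ C)); [apply Rinv_0_lt_compat; lra|].
  rewrite Rmult_assoc, Rinv_r by lra; rewrite Rmult_1_r; apply Rmin_r.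
Qed.

Lemma continuous_nonneg_mult (f g : R -> CC) :
  continuous_nonneg f -> continuous_nonneg g -> continuous_nonneg (fun t => f t * g t)%C.
Proof.
  intros Hf Hg t0 Ht0 eps Heps.
  pose proof (Cmod_ge_0 (f t0)); pose proof (Cmod_ge_0 (g t0)).
  destruct (small_factor eps (1 + Cmod (f t0) + Cmod (g t0)) Heps ltac:(lra)) as [eta [Heta HetaC]].
  destruct (Hf t0 Ht0 eta (proj1 Heta)) as [d1 [Hd1 H1]].
  destruct (Hg t0 Ht0 eta (proj1 Heta)) as [d2 [Hd2 H2]].
  exists (Rmin d1 d2); split; [apply Rmin_glb_lt; auto|].
  intros t Ht Htd.
  specialize (H1 t Ht (Rlt_le_trans _ _ _ Htd (Rmin_l _ _))).
  specialize (H2 t Ht (Rlt_le_trans _ _ _ Htd (Rmin_r _ _))).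
  pose proof (Cmod_ge_0 (f t - f t0)); pose proof (Cmod_ge_0 (g t - g t0)).
  eapply Rle_lt_trans; [apply Cmod_mult_sub_le|]; nra.
Qed.

Lemma Cmod_product_remainder_le (F G f g df dg : CC) (h eta : R) :
  0 < h <= eta -> eta <= 1 ->
  Cmod (F - f - h * df) <= eta * h -> Cmod (G - g - h * dg) <= eta * h ->
  Cmod (F * G - f * g - h * (df * g + f * dg)) <=
    eta * h * (2 + Cmod g + Cmod dg + Cmod f + Cmod df * (1 + Cmod dg)).
Proof.
  intros Hh Heta Hrf Hrg.
  pose proof (Cmod_ge_0 g); pose proof (Cmod_ge_0 dg).
  pose proof (Cmod_ge_0 f); pose proof (Cmod_ge_0 df).
  set (rf := (F - f - h * df)%C) in Hrf; set (rg := (G - g - h * dg)%C) in Hrg.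
  assert (Hdg : Cmod (G - g) <= h * (1 + Cmod dg)).
  { replace (G - g)%C with (rg + h * dg)%C by (unfold rg; ring).
    eapply Rle_trans; [apply Cmod_triangle|]; rewrite Cmod_mult, Cmod_R, Rabs_right by lra; nra. }
  assert (HG : Cmod G <= Cmod g + 1 + Cmod dg).
  { replace G with (g + (G - g))%C by ring; eapply Rle_trans; [apply Cmod_triangle|]; nra. }
  replace (F * G - f * g - h * (df * g + f * dg))%C
    with (rf * G + f * rg + h * df * (G - g))%C by (unfold rf, rg; ring).
  eapply Rle_trans; [apply Cmod_triangle|].
  eapply Rle_trans; [apply Rplus_le_compat_r, Cmod_triangle|].
  rewrite !Cmod_mult, Cmod_R, Rabs_right by lra.
  pose proof (Cmod_ge_0 rf); pose proof (Cmod_ge_0 rg); pose proof (Cmod_ge_0 G).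
  assert (Cmod rf * Cmod G <= eta * h * (Cmod g + 1 + Cmod dg)) by nra.
  assert (Cmod f * Cmod rg <= Cmod f * (eta * h)) by nra.
  assert (h * Cmod df * Cmod (G - g) <= h * Cmod df * (h * (1 + Cmod dg)))
    by (apply Rmult_le_compat_l; [nra|auto]).
  assert (h * Cmod df * (h * (1 + Cmod dg)) <= h * Cmod df * (eta * (1 + Cmod dg)))
    by (apply Rmult_le_compat_l; nra).
  assert (0 < eta * h) by nra; nra.
Qed.

Lemma is_rderive_mult (f g : R -> CC) (s : R) (df dg : CC) :
  is_rderive f s df -> is_rderive g s dg -> is_rderive (fun t => f t * g t)%C s (df * g s + f s * dg).
Proof.
  intros Hf Hg eps Heps.
  set (C := 2 + Cmod (g s) + Cmod dg + Cmod (f s) + Cmod df * (1 + Cmod dg)).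
  assert (HC : 0 < C)
    by (unfold C; pose proof (Cmod_ge_0 (g s)); pose proof (Cmod_ge_0 dg); pose proof (Cmod_ge_0 (f s));
        pose proof (Cmod_ge_0 df); nra).
  destruct (small_factor eps C Heps HC) as [eta [Heta HetaC]].
  destruct (Hf eta (proj1 Heta)) as [d1 [Hd1 Hrf]].
  destruct (Hg eta (proj1 Heta)) as [d2 [Hd2 Hrg]].
  exists (Rmin (Rmin d1 d2) eta); split; [apply Rmin_glb_lt; [apply Rmin_glb_lt|]; lra|].
  intros h [Hh Hhd].
  pose proof (Rmin_l (Rmin d1 d2) eta); pose proof (Rmin_r (Rmin d1 d2) eta).
  pose proof (Rmin_l d1 d2); pose proof (Rmin_r d1 d2).
  eapply Rle_trans; [apply Cmod_product_remainder_le; try apply Hrf; try apply Hrg; lra|].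
  fold C; rewrite Rmult_comm, <- Rmult_assoc; apply Rmult_le_compat_r; lra.
Qed.

Lemma real_induction (P : R -> Prop) :
  P 0 ->
  (forall s, 0 < s -> (forall u, 0 <= u < s -> P u) -> P s) ->
  (forall s, 0 <= s -> P s -> exists d, 0 < d /\ forall u, s < u < s + d -> P u) ->
  forall b, 0 <= b -> P b.
Proof.
  intros H0 Hclosed Hopen b Hb.
  set (E := fun s => 0 <= s <= b /\ forall u, 0 <= u <= s -> P u).
  assert (HE0 : E 0) by (split; [lra|intros u Hu; replace u with 0 by lra; exact H0]).
  destruct (completeness E) as [sig [Hub Hlub]].
  { exists b; intros s [Hs _]; lra. }
  { exists 0; exact HE0. }
  assert (Hs0 : 0 <= sig) by (apply Hub, HE0).
  assert (Hsb : sig <= b) by (apply Hlub; intros s [Hs _]; lra).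
  assert (Hbelow : forall u, 0 <= u < sig -> P u).
  { intros u Hu; apply NNPP; intros HPu.
    enough (sig <= u) by lra.
    apply Hlub; intros s [_ Hs]; apply Rnot_lt_le; intros Hus; apply HPu, Hs; lra. }
  assert (Hsig : P sig).
  { destruct (Req_dec sig 0) as [->|Hne]; [exact H0|apply Hclosed; auto; lra]. }
  destruct (Req_dec sig b) as [<-|Hne]; [exact Hsig|].
  exfalso; destruct (Hopen sig Hs0 Hsig) as [d [Hd Hstep]].
  set (s' := sig + Rmin (d / 2) (b - sig)).
  assert (Hm : 0 < Rmin (d / 2) (b - sig) <= d / 2 /\ Rmin (d / 2) (b - sig) <= b - sig).
  { split; [split; [apply Rmin_glb_lt; lra|apply Rmin_l]|apply Rmin_r]. }
  enough (E s') by (assert (s' <= sig) by (apply Hub; auto); unfold s' in *; lra).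
  split; [unfold s'; lra|]; intros u Hu.
  destruct (Rlt_le_dec u sig) as [Hlt|Hle]; [apply Hbelow; lra|].
  destruct (Req_dec u sig) as [->|Hne']; [exact Hsig|apply Hstep; unfold s' in *; lra].
Qed.

Lemma rderive0_constant (psi : R -> CC) :
  continuous_nonneg psi -> (forall s, 0 <= s -> is_rderive psi s 0) ->
  forall t, 0 <= t -> psi t = psi 0.
Proof.
  intros Hc Hd.
  assert (Hslope : forall eps, 0 < eps -> forall t, 0 <= t -> Cmod (psi t - psi 0) <= eps * t).
  { intros eps Heps; apply real_induction.
    - replace (psi 0 - psi 0)%C with (RtoC 0) by ring; rewrite Cmod_0; lra.
    - intros s Hs Hbelow; cbv beta in Hbelow |- *; apply Rle_plus_epsilon; intros eta Heta.
      destruct (Hc s ltac:(lra) eta Heta) as [d [Hd0 Hds]].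
      set (u := s - Rmin (d / 2) (s / 2)).
      assert (Hm : 0 < Rmin (d / 2) (s / 2) <= d / 2 /\ Rmin (d / 2) (s / 2) <= s / 2).
      { split; [split; [apply Rmin_glb_lt; lra|apply Rmin_l]|apply Rmin_r]. }
      assert (Hu : 0 <= u < s) by (unfold u; lra).
      specialize (Hds u (proj1 Hu) ltac:(unfold u; rewrite Rabs_left by lra; lra)).
      rewrite <- Cmod_opp in Hds; replace (- (psi u - psi s))%C with (psi s - psi u)%C in Hds by ring.
      pose proof (Hbelow u Hu); pose proof (Cmod_sub_le_triangle (psi s) (psi u) (psi 0)).
      assert (eps * u <= eps * s) by (apply Rmult_le_compat_l; lra).
      lra.
    - intros s Hs HPs; cbv beta in HPs |- *; destruct (Hd s Hs eps Heps) as [d [Hd0 Hds]].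
      exists d; split; auto; intros u Hu.
      specialize (Hds (u - s) ltac:(lra)); replace (s + (u - s)) with u in Hds by ring.
      replace (psi u - psi s - (u - s)%R * 0)%C with (psi u - psi s)%C in Hds by ring.
      pose proof (Cmod_sub_le_triangle (psi u) (psi s) (psi 0)).
      replace (eps * u) with (eps * (u - s) + eps * s) by ring; lra. }
  intros t Ht; apply Ceq_minus, Cmod_eq_0.
  apply Rle_antisym; [|apply Cmod_ge_0].
  destruct (Req_dec t 0) as [->|Ht0].
  { replace (psi 0 - psi 0)%C with (RtoC 0) by ring; rewrite Cmod_0; lra. }
  apply Rle_plus_epsilon; intros e He; rewrite Rplus_0_l.
  specialize (Hslope (e / t) ltac:(apply Rdiv_lt_0_compat; lra) t Ht).
  replace (e / t * t) with e in Hslope by (field; lra); exact Hslope.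
Qed.

Lemma rderive_exp_unique (phi : R -> CC) (P : CC) :
  continuous_nonneg phi -> (forall s, 0 <= s -> is_rderive phi s (P * phi s)) ->
  forall t, 0 <= t -> phi t = (cexp (t * P) * phi 0)%C.
Proof.
  intros Hc Hd t Ht.
  set (psi := fun s : R => (cexp (s * - P) * phi s)%C).
  assert (Hpsi : psi t = psi 0).
  { apply rderive0_constant; auto.
    - apply continuous_nonneg_mult; [apply continuous_nonneg_cexp|exact Hc].
    - intros s Hs eps Heps.
      destruct (is_rderive_mult _ _ s _ _ (is_rderive_cexp (- P) s) (Hd s Hs) eps Heps)
        as [d [Hd0 Hds]].
      exists d; split; auto; intros h Hh; specialize (Hds h Hh).
      replace (- P * cexp (s * - P) * phi s + cexp (s * - P) * (P * phi s))%C with (RtoC 0) in Hds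
        by ring.
      exact Hds. }
  unfold psi in Hpsi; rewrite Cmult_0_l, cexp_0, Cmult_1_l in Hpsi.
  rewrite <- Hpsi, Cmult_assoc, <- cexp_add.
  replace (t * P + t * - P)%C with (RtoC 0) by ring; rewrite cexp_0; ring.
Qed.

(* Coquelicot's two normed-module structures on [C] agree, but only after unfolding
   [is_derive]; the library's calculus lemmas are stated for the second one. *)
Lemma is_derive_C_iff (f : CC -> CC) (z l : CC) :
  @is_derive C_AbsRing C_NormedModule f z l <->
  @is_derive C_AbsRing (AbsRing_NormedModule C_AbsRing) f z l.
Proof. split; intros [[Hl Hs Hb] H]; (split; [split|]); auto. Qed.

Lemma ex_derive_C_const (c z : CC) : @ex_derive C_AbsRing C_NormedModule (fun _ => c) z.
Proof. apply ex_derive_const. Qed.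

Lemma ex_derive_C_id (z : CC) : @ex_derive C_AbsRing C_NormedModule (fun w => w) z.
Proof. exists (RtoC 1); apply is_derive_C_iff, (is_derive_id (K := C_AbsRing)). Qed.

Lemma ex_derive_C_plus (f g : CC -> CC) (z : CC) :
  @ex_derive C_AbsRing C_NormedModule f z -> @ex_derive C_AbsRing C_NormedModule g z ->
  @ex_derive C_AbsRing C_NormedModule (fun w => f w + g w)%C z.
Proof. apply (ex_derive_plus (K := C_AbsRing) (V := C_NormedModule)). Qed.

Lemma ex_derive_C_mult (f g : CC -> CC) (z : CC) :
  @ex_derive C_AbsRing C_NormedModule f z -> @ex_derive C_AbsRing C_NormedModule g z ->
  @ex_derive C_AbsRing C_NormedModule (fun w => f w * g w)%C z.
Proof.
  intros [df Hf] [dg Hg]; exists (df * g z + f z * dg)%C.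
  apply is_derive_C_iff in Hf; apply is_derive_C_iff in Hg; apply is_derive_C_iff.
  exact (is_derive_mult (K := C_AbsRing) f g z df dg Hf Hg Cmult_comm).
Qed.

Lemma ex_derive_C_pow (k : nat) (z : CC) : @ex_derive C_AbsRing C_NormedModule (fun w => w ^ k)%C z.
Proof.
  induction k as [|k IH]; [apply (ex_derive_C_const (RtoC 1))|].
  apply (ex_derive_C_mult (fun w => w) (fun w => w ^ k)%C); [apply ex_derive_C_id|exact IH].
Qed.

Lemma real_analytic_fadd (f g : R -> CC) :
  real_analytic f -> real_analytic g -> real_analytic (fadd f g).
Proof.
  intros [U1 [F1 [[HU1 HR1] [Hh1 He1]]]] [U2 [F2 [[HU2 HR2] [Hh2 He2]]]].
  exists (fun z => U1 z /\ U2 z), (fun z => F1 z + F2 z)%C.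
  split; [split; [apply open_and; auto|auto]|split].
  - intros z [Hz1 Hz2]; apply ex_derive_C_plus; auto.
  - intros x; unfold fadd; rewrite He1, He2; reflexivity.
Qed.

Lemma real_analytic_fscal (c : CC) (f : R -> CC) : real_analytic f -> real_analytic (fscal c f).
Proof.
  intros [U [F [HU [Hh He]]]]; exists U, (fun z => c * F z)%C.
  split; [exact HU|split].
  - intros z Hz; apply ex_derive_C_mult; [apply ex_derive_C_const|auto].
  - intros x; unfold fscal; rewrite He; reflexivity.
Qed.

Lemma fsub_fadd (f g : R -> CC) : fsub f g = fadd f (fscal (RtoC (-1)) g).
Proof. apply functional_extensionality; intros x; unfold fsub, fadd, fscal; ring. Qed.

Lemma real_analytic_fsub (f g : R -> CC) :
  real_analytic f -> real_analytic g -> real_analytic (fsub f g).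
Proof.
  intros; rewrite fsub_fadd; apply real_analytic_fadd; auto; apply real_analytic_fscal; auto.
Qed.

Lemma real_analytic_entire (F : CC -> CC) :
  (forall z, @ex_derive C_AbsRing C_NormedModule F z) -> real_analytic (fun x => F (RtoC x)).
Proof.
  intros HF; exists (fun _ => True), F.
  split; [split; [apply open_true|auto]|split; [intros z _; apply HF|auto]].
Qed.

Definition monomial (c : CC) (k : nat) : R -> CC := fun x => (c * RtoC x ^ k)%C.

Lemma real_analytic_monomial (c : CC) (k : nat) : real_analytic (monomial c k).
Proof.
  apply (real_analytic_entire (fun z => c * z ^ k)%C); intros z.
  apply ex_derive_C_mult; [apply ex_derive_C_const|apply ex_derive_C_pow].
Qed.

(* Polynomials are coefficient lists; [peval s l z] is [sum_i l_i z^(s + i)]. *)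
Fixpoint peval (s : nat) (l : list CC) (z : CC) : CC :=
  match l with
  | nil => 0
  | c :: l' => c * z ^ s + peval (S s) l' z
  end.

Lemma peval_shift (s : nat) (l : list CC) (z : CC) : peval s l z = (z ^ s * peval 0 l z)%C.
Proof.
  revert s; induction l as [|c l IH]; intros s; simpl; [ring|].
  rewrite IH, (IH 1%nat); simpl; ring.
Qed.

Lemma ex_derive_C_peval (s : nat) (l : list CC) (z : CC) :
  @ex_derive C_AbsRing C_NormedModule (peval s l) z.
Proof.
  revert s; induction l as [|c l IH]; intros s; simpl; [apply ex_derive_C_const|].
  apply ex_derive_C_plus; auto.
  apply ex_derive_C_mult; [apply ex_derive_C_const|apply ex_derive_C_pow].
Qed.

Fixpoint padd (l1 l2 : list CC) : list CC :=
  match l1, l2 with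
  | nil, _ => l2
  | _, nil => l1
  | a :: l1', b :: l2' => (a + b)%C :: padd l1' l2'
  end.

Fixpoint pmul (l1 l2 : list CC) : list CC :=
  match l1 with
  | nil => nil
  | c :: l1' => padd (map (Cmult c) l2) (RtoC 0 :: pmul l1' l2)
  end.

Lemma peval_padd (s : nat) (l1 l2 : list CC) (z : CC) :
  peval s (padd l1 l2) z = (peval s l1 z + peval s l2 z)%C.
Proof.
  revert s l2; induction l1 as [|c l1 IH]; intros s [|d l2]; simpl; try rewrite IH; ring.
Qed.

Lemma peval_map_mult (s : nat) (c : CC) (l : list CC) (z : CC) :
  peval s (map (Cmult c) l) z = (c * peval s l z)%C.
Proof. revert s; induction l as [|d l IH]; intros s; simpl; try rewrite IH; ring. Qed.

Lemma peval_pmul (l1 l2 : list CC) (z : CC) :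
  peval 0 (pmul l1 l2) z = (peval 0 l1 z * peval 0 l2 z)%C.
Proof.
  induction l1 as [|c l1 IH]; simpl; [ring|].
  rewrite peval_padd, peval_map_mult; simpl.
  rewrite (peval_shift 1 (pmul l1 l2)), (peval_shift 1 l1), IH; simpl; ring.
Qed.

Definition is_poly (p : CC -> CC) : Prop := exists l, forall z, p z = peval 0 l z.

Lemma is_poly_const (c : CC) : is_poly (fun _ => c).
Proof. exists (c :: nil); intros z; simpl; ring. Qed.

Lemma is_poly_sub_const (w : CC) : is_poly (fun z => z - w)%C.
Proof. exists ((- w)%C :: RtoC 1 :: nil); intros z; simpl; ring. Qed.

Lemma is_poly_mult (p q : CC -> CC) : is_poly p -> is_poly q -> is_poly (fun z => p z * q z)%C.
Proof.
  intros [l1 H1] [l2 H2]; exists (pmul l1 l2); intros z; rewrite peval_pmul, H1, H2; reflexivity.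
Qed.

Lemma is_poly_pow (p : CC -> CC) (n : nat) : is_poly p -> is_poly (fun z => p z ^ n)%C.
Proof.
  intros Hp; induction n as [|n IH]; [apply (is_poly_const (RtoC 1))|].
  apply (is_poly_mult p (fun z => p z ^ n)%C); auto.
Qed.

Fixpoint prodC (f : nat -> CC) (n : nat) : CC :=
  match n with
  | O => f O
  | S n' => (prodC f n' * f n)%C
  end.

Fixpoint prodR (f : nat -> R) (n : nat) : R :=
  match n with
  | O => f O
  | S n' => prodR f n' * f n
  end.

Lemma prodC_eq0 (f : nat -> CC) (n p : nat) : (p <= n)%nat -> f p = 0 -> prodC f n = 0.
Proof.
  induction n as [|n IH]; intros Hp Hf; simpl.
  - replace p with O in Hf by lia; exact Hf.
  - destruct (Nat.eq_dec p (S n)) as [->|Hne]; [rewrite Hf; ring|].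
    rewrite IH; [ring|lia|exact Hf].
Qed.

Lemma prodC_neq0 (f : nat -> CC) (n : nat) : (forall j, (j <= n)%nat -> f j <> 0) -> prodC f n <> 0.
Proof.
  induction n as [|n IH]; intros H; simpl; [apply H; lia|].
  apply Cmult_neq_0; [apply IH; intros; apply H|apply H]; lia.
Qed.

Lemma prodR_nonneg (f : nat -> R) (n : nat) : (forall j, 0 <= f j) -> 0 <= prodR f n.
Proof. intros H; induction n; simpl; auto; apply Rmult_le_pos; auto. Qed.

Lemma Cmod_prodC_le (f : nat -> CC) (B : nat -> R) (n : nat) :
  (forall j, (j <= n)%nat -> Cmod (f j) <= B j) -> Cmod (prodC f n) <= prodR B n.
Proof.
  induction n as [|n IH]; intros H; simpl; [apply H; lia|].
  rewrite Cmod_mult; apply Rmult_le_compat; try apply Cmod_ge_0; [apply IH; intros|]; apply H; lia.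
Qed.

Lemma is_poly_prodC (F : nat -> CC -> CC) (n : nat) :
  (forall j, is_poly (F j)) -> is_poly (fun z => prodC (fun j => F j z) n).
Proof.
  intros H; induction n as [|n IH]; simpl; [apply H|].
  apply (is_poly_mult (fun z => prodC (fun j => F j z) n) (F (S n))); auto.
Qed.

Lemma ball_Cmod (z y : CC) (eps : posreal) : @ball C_UniformSpace z eps y -> Cmod (y - z) < 2 * eps.
Proof.
  intros H; pose proof (C_NormedModule_mixin_compat2 z y eps H) as Hn.
  assert (sqrt 2 < 2) by (rewrite <- (sqrt_pow2 2) at 2 by lra; apply sqrt_lt_1_alt; lra).
  pose proof (cond_pos eps); change (minus y z) with (y - z)%C in Hn; nra.
Qed.

Lemma open_Cmod_lt (r : R) : @open C_UniformSpace (fun z => Cmod z < r).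
Proof.
  intros z Hz; assert (He : 0 < (r - Cmod z) / 2) by lra.
  exists (mkposreal _ He); intros y Hy; apply ball_Cmod in Hy; simpl in Hy.
  replace y with (z + (y - z))%C by ring.
  eapply Rle_lt_trans; [apply Cmod_triangle|]; lra.
Qed.

Lemma nbhdR_strip (e : R) : 0 < e -> nbhdR (fun z => Rabs (Im z) < e).
Proof.
  intros He; split; [|intros x; simpl; rewrite Rabs_R0; exact He].
  intros z Hz; assert (Hd : 0 < (e - Rabs (Im z)) / 2) by lra.
  exists (mkposreal _ Hd); intros y Hy; apply ball_Cmod in Hy; simpl in Hy.
  pose proof (abs_Im_le_Cmod (y - z)%C) as Hi.
  change (Im (y - z)%C) with (Im y - Im z) in Hi.
  pose proof (Rabs_triang_inv (Im y) (Im z)); lra.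
Qed.

Lemma nbhdR_full : nbhdR (fun _ => True).
Proof. split; [apply open_true|auto]. Qed.

Lemma compactC_bounded (Kc : CC -> Prop) :
  compactC Kc -> exists r, 1 <= r /\ forall z, Kc z -> Cmod z <= r.
Proof.
  intros HK; destruct (HK R (fun r z => Cmod z < r)) as [l Hl].
  - intros r; apply open_Cmod_lt.
  - intros z _; exists (Cmod z + 1); lra.
  - exists (Rmax 1 (MaxRlist l)); split; [apply Rmax_l|].
    intros z Hz; destruct (Hl z Hz) as [r [Hr Hzr]].
    pose proof (MaxRlist_P1 l r Hr); pose proof (Rmax_r 1 (MaxRlist l)); lra.
Qed.

Lemma cont_seminormA_eval (x0 : R) : cont_seminormA (fun f => Cmod (f x0)).
Proof.
  split; [split|].
  - intros f g _ _; apply Cmod_triangle.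
  - intros c f _; apply Cmod_mult.
  - intros U [_ HR]; exists (fun z => z = RtoC x0), 1.
    split; [|split; [intros z ->; apply HR|split; [lra|]]].
    + intros I O HO Hcov; destruct (Hcov (RtoC x0) eq_refl) as [i Hi].
      exists (i :: nil); intros z ->; exists i; split; [left|]; auto.
    + intros F _ s Hs; rewrite Rmult_1_l; apply Hs; reflexivity.
Qed.

Section ContLinearOp.
Variable T : opA.
Hypothesis HT : cont_linear_opA T.

Lemma T_real_analytic (f : R -> CC) : real_analytic f -> real_analytic (T f).
Proof. apply HT. Qed.

Lemma T_fadd (f g : R -> CC) (x : R) :
  real_analytic f -> real_analytic g -> T (fadd f g) x = (T f x + T g x)%C.
Proof. intros; apply HT; auto. Qed.

Lemma T_fscal (c : CC) (f : R -> CC) (x : R) : real_analytic f -> T (fscal c f) x = (c * T f x)%C.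
Proof. intros; apply HT; auto. Qed.

Lemma T_fsub (f g : R -> CC) (x : R) :
  real_analytic f -> real_analytic g -> T (fsub f g) x = (T f x - T g x)%C.
Proof.
  intros; rewrite fsub_fadd, T_fadd, T_fscal; auto; [ring|apply real_analytic_fscal; auto].
Qed.

Lemma cont_seminormA_comp (q : (R -> CC) -> R) : cont_seminormA q -> cont_seminormA (fun f => q (T f)).
Proof. apply HT. Qed.

Lemma T_peval_nodes (x0 : R) (n : nat) (c w : nat -> CC) :
  (forall k, T (monomial 1 k) x0 = sumC (fun j => c j * w j ^ k)%C n) ->
  forall s l, T (fun y => peval s l (RtoC y)) x0 = sumC (fun j => c j * peval s l (w j))%C n.
Proof.
  intros Hmono s l; revert s; induction l as [|a l IH]; intros s; simpl.
  - replace (fun _ : R => RtoC 0) with (fscal 0 (monomial 1 0))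
      by (apply functional_extensionality; intros y; unfold fscal; ring).
    rewrite T_fscal by apply real_analytic_monomial.
    rewrite (sumC_ext _ (fun j => 0 * c j)%C) by (intros; ring).
    rewrite sumC_mult_l; ring.
  - replace (fun y : R => a * RtoC y ^ s + peval (S s) l (RtoC y))%C
      with (fadd (fscal a (monomial 1 s)) (fun y => peval (S s) l (RtoC y)))
      by (apply functional_extensionality; intros y; unfold fadd, fscal, monomial; ring).
    assert (Hl : real_analytic (fun y => peval (S s) l (RtoC y)))
      by (apply (real_analytic_entire (peval (S s) l)), ex_derive_C_peval).
    pose proof (real_analytic_monomial 1 s).
    rewrite T_fadd by (try apply real_analytic_fscal; auto).
    rewrite T_fscal, IH, Hmono by auto.
    rewrite <- sumC_mult_l, <- sumC_plus.
    apply sumC_ext; intros j _; ring.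
Qed.

End ContLinearOp.

Lemma Re_monomial (c : CC) (k : nat) (y : R) : Re (monomial c k y) = Re c * y ^ k.
Proof. unfold monomial; rewrite <- RtoC_pow; destruct c; simpl; ring. Qed.

Lemma Im_monomial (c : CC) (k : nat) (y : R) : Im (monomial c k y) = Im c * y ^ k.
Proof. unfold monomial; rewrite <- RtoC_pow; destruct c; simpl; ring. Qed.

Lemma Derive_scal_pow (r : R) (k : nat) (x : R) :
  Derive (fun y => r * y ^ k) x = r * (INR k * x ^ pred k).
Proof. apply is_derive_unique; auto_derive; auto; ring. Qed.

Lemma theta_monomial (c : CC) (k : nat) : theta (monomial c k) = monomial (c * INR k) k.
Proof.
  apply functional_extensionality; intros x; unfold theta, derivC.
  rewrite (Derive_ext _ (fun y => Re c * y ^ k)) by (intros; apply Re_monomial).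
  rewrite (Derive_ext (fun y => Im _) (fun y => Im c * y ^ k)) by (intros; apply Im_monomial).
  rewrite !Derive_scal_pow.
  assert (E : x * (INR k * x ^ pred k) = INR k * x ^ k) by (destruct k; simpl; ring).
  apply C_ext; rewrite ?Re_monomial, ?Im_monomial; destruct c as [c1 c2]; simpl.
  - transitivity (c1 * (x * (INR k * x ^ pred k))); [ring|rewrite E; ring].
  - transitivity (c2 * (x * (INR k * x ^ pred k))); [ring|rewrite E; ring].
Qed.

Definition Psymbol (a : nat -> CC) (K k : nat) : CC := sumC (fun j => a j * INR k ^ j)%C K.

Lemma Ptheta_monomial (a : nat -> CC) (K k : nat) :
  Ptheta a K (monomial 1 k) = fscal (Psymbol a K k) (monomial 1 k).
Proof.
  apply functional_extensionality; intros x; unfold Ptheta, fscal, Psymbol.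
  assert (Hiter : forall j, Nat.iter j theta (monomial 1 k) = monomial (INR k ^ j) k).
  { induction j as [|j IH]; simpl Nat.iter; [f_equal; ring|].
    rewrite IH, theta_monomial; f_equal; simpl; ring. }
  rewrite <- sumC_mult_r; apply sumC_ext; intros j _.
  rewrite Hiter; unfold monomial; ring.
Qed.

Section SemigroupOnMonomials.
Variables (T : R -> opA) (a : nat -> CC) (K : nat).
Hypothesis HC : C0_semigroup T.
Hypothesis HG : generates (Ptheta a K) T.

Lemma T_cont_linear (t : R) : 0 <= t -> cont_linear_opA (T t).
Proof. apply HC. Qed.

Lemma orbit_continuous (g : R -> CC) (x0 : R) :
  real_analytic g -> continuous_nonneg (fun s => T s g x0).
Proof.
  intros Hg t0 Ht0 eps Heps.
  exact (proj2 (proj2 (proj2 HC)) g Hg t0 Ht0 _ (cont_seminormA_eval x0) eps Heps).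
Qed.

Lemma orbit_rderive (k : nat) (x0 s : R) : 0 <= s ->
  is_rderive (fun t => T t (monomial 1 k) x0) s (Psymbol a K k * T s (monomial 1 k) x0).
Proof.
  intros Hs eps Heps; set (g := monomial 1 k).
  assert (Hg : real_analytic g) by apply real_analytic_monomial.
  pose proof (T_cont_linear s Hs) as HTs.
  destruct (HG g Hg _ (cont_seminormA_comp _ HTs _ (cont_seminormA_eval x0)) eps Heps)
    as [d [Hd Hdiff]].
  exists d; split; auto; intros h [Hh Hhd]; specialize (Hdiff h Hh Hhd); simpl in Hdiff.
  assert (HTh : real_analytic (T h g))
    by (apply (T_real_analytic (T h)); [apply T_cont_linear; lra|auto]).
  unfold g in Hdiff; rewrite Ptheta_monomial in Hdiff; fold g in Hdiff.
  rewrite T_fsub, !T_fscal, T_fsub in Hdiff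
    by (auto; try apply real_analytic_fscal; try apply real_analytic_fsub; auto).
  rewrite (proj1 (proj2 HC) s h Hs ltac:(lra) g Hg x0) in Hdiff.
  rewrite RtoC_inv in Hdiff by lra.
  replace (T (s + h)%R g x0 - T s g x0 - h * (Psymbol a K k * T s g x0))%C
    with (h * (/ h * (T (s + h)%R g x0 - T s g x0) - Psymbol a K k * T s g x0))%C.
  - rewrite Cmod_mult, Cmod_R, Rabs_right by lra; rewrite Rmult_comm.
    apply Rmult_le_compat_r; lra.
  - field; intros E; apply RtoC_inj in E; lra.
Qed.

Lemma T_monomial (k : nat) (x0 t : R) : 0 <= t ->
  T t (monomial 1 k) x0 = (cexp (t * Psymbol a K k) * RtoC x0 ^ k)%C.
Proof.
  intros Ht.
  rewrite (rderive_exp_unique (fun s => T s (monomial 1 k) x0) (Psymbol a K k)); auto.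
  - rewrite (proj1 (proj2 (proj2 HC)) _ (real_analytic_monomial 1 k) x0); unfold monomial; ring.
  - apply orbit_continuous, real_analytic_monomial.
  - apply orbit_rderive.
Qed.

End SemigroupOnMonomials.

(** * Case (1): real parts of the symbol grow too fast *)

Lemma sumR_abs_nonneg (c : nat -> R) (m : nat) : 0 <= sumR (fun j => Rabs (c j)) m.
Proof.
  induction m as [|m IH]; [rewrite sum_O; apply Rabs_pos|].
  rewrite sumR_Sn; pose proof (Rabs_pos (c (S m))); lra.
Qed.

Lemma Rabs_poly_le (c : nat -> R) (m : nat) (y : R) : 1 <= y ->
  Rabs (sumR (fun j => c j * y ^ j) m) <= sumR (fun j => Rabs (c j)) m * y ^ m.
Proof.
  intros Hy; induction m as [|m IH]; [rewrite !sum_O; simpl; rewrite !Rmult_1_r; lra|].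
  rewrite !sumR_Sn.
  assert (Hm : y ^ m <= y ^ S m) by (simpl; pose proof (pow_le y m ltac:(lra)); nra).
  pose proof (sumR_abs_nonneg c m).
  eapply Rle_trans; [apply Rabs_triang|].
  rewrite Rabs_mult, (Rabs_right (y ^ S m)) by (apply Rle_ge, pow_le; lra).
  assert (sumR (fun j => Rabs (c j)) m * y ^ m <= sumR (fun j => Rabs (c j)) m * y ^ S m)
    by (apply Rmult_le_compat_l; auto).
  lra.
Qed.

Lemma poly_exceeds_linear (c : nat -> R) (m : nat) (A B : R) : (1 <= m)%nat -> 0 < c (S m) ->
  exists n : nat, A + B * INR n < sumR (fun j => c j * INR n ^ j) (S m).
Proof.
  intros Hm Hc.
  set (S0 := sumR (fun j => Rabs (c j)) m); set (Z := S0 + Rabs A + Rabs B).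
  pose proof (sumR_abs_nonneg c m); pose proof (Rabs_pos A); pose proof (Rabs_pos B).
  destruct (INR_archimed 1 (Rmax 1 ((Z + 1) / c (S m))) ltac:(lra)) as [n Hn].
  exists n; rewrite Rmult_1_r in Hn; set (y := INR n) in *.
  assert (Hy1 : 1 <= y) by (pose proof (Rmax_l 1 ((Z + 1) / c (S m))); lra).
  assert (Hcy : Z + 1 <= c (S m) * y).
  { pose proof (Rmax_r 1 ((Z + 1) / c (S m))).
    apply (Rmult_le_reg_r (/ c (S m))); [apply Rinv_0_lt_compat; lra|].
    replace (c (S m) * y * / c (S m)) with y by (field; lra); lra. }
  assert (Hym : 1 <= y ^ m) by (apply pow_R1_Rle; lra).
  assert (Hyy : y <= y ^ m) by (destruct m; [lia|]; simpl; pose proof (pow_R1_Rle y m Hy1); nra).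
  assert (HAB : A + B * y <= (Rabs A + Rabs B) * y ^ m).
  { pose proof (Rle_abs A).
    assert (B * y <= Rabs B * y) by (apply Rmult_le_compat_r; [lra|apply Rle_abs]).
    nra. }
  assert (Hlow : - (S0 * y ^ m) <= sumR (fun j => c j * y ^ j) m).
  { pose proof (Rabs_poly_le c m y Hy1) as Hp; fold S0 in Hp.
    pose proof (Rle_abs (- sumR (fun j => c j * y ^ j) m)) as Hn'; rewrite Rabs_Ropp in Hn'; lra. }
  rewrite sumR_Sn; simpl (y ^ S m).
  assert (Z * y ^ m < c (S m) * y * y ^ m) by (apply Rmult_lt_compat_r; lra).
  unfold Z in *; lra.
Qed.

Lemma sumR_trunc (f : nat -> R) (l d : nat) :
  (forall j, (l < j <= l + d)%nat -> f j = 0) -> sumR f (l + d) = sumR f l.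
Proof.
  induction d as [|d IH]; intros H; [rewrite Nat.add_0_r; reflexivity|].
  rewrite Nat.add_succ_r, sumR_Sn, IH, (H (S (l + d))); [apply Rplus_0_r|lia|intros; apply H; lia].
Qed.

Lemma Re_Psymbol (a : nat -> CC) (K k : nat) :
  Re (Psymbol a K k) = sumR (fun j => Re (a j) * INR k ^ j) K.
Proof.
  unfold Psymbol; rewrite Re_sumC; apply sumR_ext; intros j _.
  rewrite <- RtoC_pow; apply re_scal_r.
Qed.

Lemma Psymbol_exp_bound (T : R -> opA) (a : nat -> CC) (K : nat) :
  C0_semigroup T -> generates (Ptheta a K) T ->
  exists M r, 0 <= M /\ 1 <= r /\ forall k, exp (Re (Psymbol a K k)) <= M * r ^ k.
Proof.
  intros HC HG.
  pose proof (cont_seminormA_comp _ (T_cont_linear T HC 1 ltac:(lra)) _ (cont_seminormA_eval 1)) as Hq.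
  destruct (proj2 Hq _ nbhdR_full) as [Kc [M [HKc [_ [HM Hbound]]]]].
  destruct (compactC_bounded Kc HKc) as [r [Hr HKr]].
  exists M, r; split; [exact HM|split; [exact Hr|intros k]].
  specialize (Hbound (fun z => z ^ k)%C (fun z _ => ex_derive_C_pow k z) (r ^ k)); cbv beta in Hbound.
  replace (fun x : R => (RtoC x ^ k)%C) with (monomial 1 k) in Hbound
    by (apply functional_extensionality; intros x; unfold monomial; ring).
  rewrite (T_monomial T a K HC HG k 1 1 ltac:(lra)), Cmod_mult, Cmod_cexp, Cmult_1_l, Cpow_1_l,
    Cmod_1, Rmult_1_r in Hbound.
  apply Hbound; intros z Hz; rewrite Cmod_pow; apply pow_incr; split; [apply Cmod_ge_0|auto].
Qed.

Lemma no_generator_Re_dominant (T : R -> opA) (a : nat -> CC) (K l : nat) :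
  C0_semigroup T -> generates (Ptheta a K) T -> (2 <= l <= K)%nat ->
  (forall j, (l < j <= K)%nat -> Re (a j) = 0) -> 0 < Re (a l) -> False.
Proof.
  intros HC HG Hl Hz Hpos.
  destruct (Psymbol_exp_bound T a K HC HG) as [M [r [HM [Hr Hbound]]]].
  destruct l as [|m]; [lia|].
  destruct (poly_exceeds_linear (fun j => Re (a j)) m (ln (M + 1)) (ln r) ltac:(lia) Hpos) as [k Hk].
  specialize (Hbound k); rewrite Re_Psymbol in Hbound.
  replace K with (S m + (K - S m))%nat in Hbound by lia.
  rewrite sumR_trunc in Hbound by (intros j Hj; rewrite Hz by lia; ring).
  apply exp_increasing in Hk; rewrite exp_plus, exp_ln in Hk by lra.
  replace (exp (ln r * INR k)) with (r ^ k) in Hk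
    by (rewrite Rmult_comm, <- ln_pow, exp_ln by (try apply pow_lt; lra); reflexivity).
  pose proof (pow_lt r k ltac:(lra)); nra.
Qed.

(** * Case (2): arithmetic of the imaginary part of the symbol *)

Lemma common_denominator (b : nat -> R) (n : nat) :
  (forall j, (j <= n)%nat -> exists q : Q, b j = Q2R q) ->
  exists D : Z, (0 < D)%Z /\ forall j, (j <= n)%nat -> exists m : Z, IZR D * b j = IZR m.
Proof.
  assert (Hden : forall q : Q, IZR (Zpos (Qden q)) * Q2R q = IZR (Qnum q)).
  { intros q; unfold Q2R; field; apply not_0_IZR; lia. }
  induction n as [|n IH]; intros Hq.
  - destruct (Hq O (le_n _)) as [q Eq]; exists (Zpos (Qden q)); split; [lia|].
    intros j Hj; replace j with O by lia; exists (Qnum q); rewrite Eq; apply Hden.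
  - destruct IH as [D [HD HDb]]; [intros; apply Hq; lia|].
    destruct (Hq (S n) (le_n _)) as [q Eq].
    exists (D * Zpos (Qden q))%Z; split; [lia|]; intros j Hj.
    destruct (Nat.eq_dec j (S n)) as [->|Hne].
    + exists (D * Qnum q)%Z; rewrite Eq, !mult_IZR, <- Hden; ring.
    + destruct (HDb j ltac:(lia)) as [m Hm]; exists (m * Zpos (Qden q))%Z.
      rewrite !mult_IZR, <- Hm; ring.
Qed.

Lemma int_poly_at_int (c : nat -> R) (n : nat) :
  (forall j, (j <= n)%nat -> exists m : Z, c j = IZR m) ->
  forall w : Z, exists m : Z, sumR (fun j => c j * IZR w ^ j) n = IZR m.
Proof.
  intros Hc w; induction n as [|n IH].
  - destruct (Hc O (le_n _)) as [m Hm]; exists (m * w ^ 0)%Z.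
    rewrite sum_O, Hm, mult_IZR, pow_IZR; reflexivity.
  - destruct IH as [m1 Hm1]; [intros; apply Hc; lia|].
    destruct (Hc (S n) (le_n _)) as [m2 Hm2].
    exists (m1 + m2 * w ^ Z.of_nat (S n))%Z.
    rewrite sumR_Sn, Hm1, Hm2, plus_IZR, mult_IZR, pow_IZR; reflexivity.
Qed.

Lemma pow_IZR_add_sub (w N : Z) (j : nat) :
  exists m : Z, (IZR w + IZR N) ^ j - IZR w ^ j = IZR N * IZR m.
Proof.
  induction j as [|j [m Hm]]; [exists 0%Z; simpl; ring|].
  exists ((w + N) * m + w ^ Z.of_nat j)%Z.
  rewrite plus_IZR, mult_IZR, plus_IZR, <- pow_IZR; simpl.
  replace ((IZR w + IZR N) * (IZR w + IZR N) ^ j - IZR w * IZR w ^ j)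
    with ((IZR w + IZR N) * ((IZR w + IZR N) ^ j - IZR w ^ j) + IZR N * IZR w ^ j) by ring.
  rewrite Hm; ring.
Qed.

Lemma int_poly_shift_sub (c : nat -> R) (n : nat) :
  (forall j, (j <= n)%nat -> exists m : Z, c j = IZR m) ->
  forall w N : Z, exists m : Z,
    sumR (fun j => c j * (IZR w + IZR N) ^ j) n - sumR (fun j => c j * IZR w ^ j) n = IZR N * IZR m.
Proof.
  intros Hc w N; induction n as [|n IH].
  - destruct (Hc O (le_n _)) as [m1 Hm1]; destruct (pow_IZR_add_sub w N 0) as [m2 Hm2].
    exists (m1 * m2)%Z; rewrite !sum_O, mult_IZR, Hm1.
    replace (IZR m1 * (IZR w + IZR N) ^ 0 - IZR m1 * IZR w ^ 0)
      with (IZR m1 * ((IZR w + IZR N) ^ 0 - IZR w ^ 0)) by ring.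
    rewrite Hm2; ring.
  - destruct IH as [m1 Hm1]; [intros; apply Hc; lia|].
    destruct (Hc (S n) (le_n _)) as [m2 Hm2]; destruct (pow_IZR_add_sub w N (S n)) as [m3 Hm3].
    exists (m1 + m2 * m3)%Z; rewrite !sumR_Sn, plus_IZR, mult_IZR, Hm2.
    replace (sumR (fun j => c j * (IZR w + IZR N) ^ j) n + IZR m2 * (IZR w + IZR N) ^ S n -
      (sumR (fun j => c j * IZR w ^ j) n + IZR m2 * IZR w ^ S n))
      with (sumR (fun j => c j * (IZR w + IZR N) ^ j) n - sumR (fun j => c j * IZR w ^ j) n
            + IZR m2 * ((IZR w + IZR N) ^ S n - IZR w ^ S n)) by ring.
    rewrite Hm1, Hm3; ring.
Qed.

Section ImaginaryRational.
Variables (a : nat -> CC) (K : nat).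
Hypothesis HK : (2 <= K)%nat.
Hypothesis HaK : a K <> 0.
Hypothesis Hq : forall j, (2 <= j <= K)%nat -> exists q : Q, a j = (0, Q2R q).

Definition qcoef (j : nat) : R := if Nat.leb 2 j then Im (a j) else 0.

Definition Qpoly (y : R) : R := sumR (fun j => qcoef j * y ^ j) K.

Lemma sumC_low_terms (f : nat -> CC) (n : nat) : (1 <= n)%nat ->
  sumC (fun j => if Nat.leb 2 j then RtoC 0 else f j) n = (f O + f 1%nat)%C.
Proof.
  induction n as [|n IH]; intros Hn; [lia|].
  destruct n as [|n]; [rewrite sumC_Sn, sum_O; simpl; ring|].
  rewrite sumC_Sn, IH by lia; simpl; ring.
Qed.

Lemma sumC_imag (g : nat -> R) (n : nat) : sumC (fun j => (0, g j)) n = (0, sumR g n).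
Proof.
  apply C_ext; [rewrite Re_sumC|rewrite Im_sumC; reflexivity]; simpl.
  rewrite sum_n_const; ring.
Qed.

Lemma Psymbol_split (k : nat) : Psymbol a K k = (a O + a 1%nat * INR k + (0, Qpoly (INR k))%R)%C.
Proof.
  assert (Hterm : forall j, (j <= K)%nat -> (a j * INR k ^ j =
    (if Nat.leb 2 j then RtoC 0 else a j * INR k ^ j) + (0, qcoef j * INR k ^ j)%R)%C).
  { intros j Hj; unfold qcoef; destruct (Nat.leb 2 j) eqn:E.
    - apply Nat.leb_le in E; destruct (Hq j ltac:(lia)) as [q ->]; rewrite <- RtoC_pow.
      apply C_ext; simpl; ring.
    - apply C_ext; simpl; ring. }
  unfold Psymbol, Qpoly; rewrite (sumC_ext _ _ K Hterm), sumC_plus, sumC_low_terms, sumC_imag by lia.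
  simpl; ring.
Qed.

Lemma Qpoly_denominator : exists D : Z, (0 < D)%Z /\
  (forall w : Z, exists m : Z, IZR D * Qpoly (IZR w) = IZR m) /\
  (forall w N : Z, exists m : Z, IZR D * (Qpoly (IZR w + IZR N) - Qpoly (IZR w)) = IZR N * IZR m).
Proof.
  destruct (common_denominator qcoef K) as [D [HD Hint]].
  { intros j Hj; unfold qcoef; destruct (Nat.leb 2 j) eqn:E; [|exists 0%Q; unfold Q2R; simpl; ring].
    apply Nat.leb_le in E; destruct (Hq j ltac:(lia)) as [q ->]; exists q; reflexivity. }
  assert (HDQ : forall y, IZR D * Qpoly y = sumR (fun j => IZR D * qcoef j * y ^ j) K).
  { intros y; unfold Qpoly; rewrite <- sumR_mult_l; apply sumR_ext; intros; ring. }
  exists D; split; [exact HD|split].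
  - intros w; rewrite HDQ; apply int_poly_at_int; exact Hint.
  - intros w N; rewrite Rmult_minus_distr_l, !HDQ; apply int_poly_shift_sub; exact Hint.
Qed.

Lemma Qpoly_0 : Qpoly 0 = 0.
Proof.
  unfold Qpoly; rewrite (sumR_ext _ (fun _ => 0)), sum_n_const; [ring|].
  intros j _; unfold qcoef; destruct (Nat.leb 2 j) eqn:E; [|ring].
  apply Nat.leb_le in E; rewrite pow_i by lia; ring.
Qed.

Lemma Qpoly_not_additive : exists n0 : nat, Qpoly (INR n0 + 2) - Qpoly (INR n0) - Qpoly 2 <> 0.
Proof.
  apply NNPP; intros Hn.
  assert (Hadd : forall n : nat, Qpoly (INR n + 2) = Qpoly (INR n) + Qpoly 2).
  { intros n; apply NNPP; intros E; apply Hn; exists n; intros E2; apply E; lra. }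
  assert (Hlin : forall m : nat, Qpoly (2 * INR m) = 0 + Qpoly 2 * INR m).
  { induction m as [|m IH]; [simpl; rewrite Rmult_0_r, Qpoly_0; ring|].
    replace (2 * INR (S m)) with (INR (2 * m) + 2) by (rewrite S_INR, mult_INR; simpl; ring).
    rewrite Hadd, mult_INR; change (INR 2) with (1 + 1).
    replace ((1 + 1) * INR m) with (2 * INR m) by ring.
    rewrite IH, S_INR; ring. }
  set (c := fun j => qcoef j * 2 ^ j).
  assert (Hc : forall y, Qpoly (2 * y) = sumR (fun j => c j * y ^ j) K).
  { intros y; apply sumR_ext; intros j _; unfold c; rewrite Rpow_mult_distr; ring. }
  assert (HcK : c K <> 0).
  { unfold c, qcoef; replace (Nat.leb 2 K) with true by (symmetry; apply Nat.leb_le; lia).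
    destruct (Hq K ltac:(lia)) as [q Eq]; intros E; apply HaK; rewrite Eq in *; simpl in E.
    apply Rmult_integral in E as [E|E]; [rewrite E; reflexivity|].
    pose proof (pow_lt 2 K ltac:(lra)); lra. }
  destruct K as [|m]; [lia|].
  destruct (Rlt_or_le 0 (c (S m))) as [Hpos|Hneg].
  - destruct (poly_exceeds_linear c m 0 (Qpoly 2) ltac:(lia) Hpos) as [n Hlt].
    rewrite <- Hc, Hlin in Hlt; lra.
  - destruct (poly_exceeds_linear (fun j => - c j) m 0 (- Qpoly 2) ltac:(lia) ltac:(lra)) as [n Hlt].
    rewrite (sumR_ext _ (fun j => -1 * (c j * INR n ^ j))) in Hlt by (intros; ring).
    rewrite sumR_mult_l, <- Hc, Hlin in Hlt; lra.
Qed.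

End ImaginaryRational.

Lemma geom_sum_mult (w : CC) (n : nat) : ((w - 1) * sumC (fun j => w ^ j)%C n = w ^ S n - 1)%C.
Proof.
  induction n as [|n IH]; [rewrite sum_O; simpl; ring|].
  rewrite sumC_Sn; transitivity ((w - 1) * sumC (fun j => w ^ j)%C n + (w - 1) * w ^ S n)%C; [ring|].
  rewrite IH; simpl; ring.
Qed.

Lemma geom_sum_root (w : CC) (n : nat) :
  w <> 1 -> (w ^ S n = 1)%C -> sumC (fun j => w ^ j)%C n = RtoC 0.
Proof.
  intros Hw Hn; pose proof (geom_sum_mult w n) as H; rewrite Hn in H.
  assert (Hw1 : (w - 1)%C <> 0) by (apply Cminus_eq_contra; exact Hw).
  assert (Hcancel : forall S0 : CC, ((w - 1) * S0 = 1 - 1)%C -> S0 = 0).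
  { intros S0 HS; transitivity (/ (w - 1) * ((w - 1) * S0))%C; [field; exact Hw1|].
    rewrite HS; ring. }
  exact (Hcancel _ H).
Qed.

Lemma geom_sum_1 (n : nat) : sumC (fun j => 1 ^ j)%C n = RtoC (INR (S n)).
Proof.
  induction n as [|n IH]; [rewrite sum_O; simpl; ring|].
  rewrite sumC_Sn, IH, Cpow_1_l, (S_INR (S n)), RtoC_plus; reflexivity.
Qed.

Lemma sumC_single (f : nat -> CC) (p n : nat) : (p <= n)%nat ->
  (forall j, (j <= n)%nat -> j <> p -> f j = 0) -> sumC f n = f p.
Proof.
  induction n as [|n IH]; intros Hp Hz; [rewrite sum_O; f_equal; lia|].
  rewrite sumC_Sn; destruct (Nat.eq_dec p (S n)) as [->|Hne].
  - rewrite (sumC_ext _ (fun _ => 0 * 0)%C) by (intros; rewrite Hz by lia; ring).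
    rewrite sumC_mult_l; eq_CC; ring.
  - rewrite IH, (Hz (S n)) by (try intros; try apply Hz; lia); eq_CC; ring.
Qed.

Section RootOfUnity.
Variable N : nat.
Hypothesis HN : (0 < N)%nat.

Definition root_unity : CC := cexp (0, 2 * PI / INR N).

Lemma root_unity_pow (m : nat) : (root_unity ^ m)%C = cexp (0, 2 * PI * INR m / INR N).
Proof.
  unfold root_unity; rewrite <- cexp_natmul; f_equal.
  apply C_ext; simpl; field; apply not_0_INR; lia.
Qed.

Lemma root_unity_pow_eq1 (m : nat) : (root_unity ^ m)%C = 1 <-> exists w, m = (N * w)%nat.
Proof.
  pose proof (lt_0_INR N HN); pose proof PI_RGT_0.
  split.
  - rewrite root_unity_pow; intros H1; apply cexp_i_eq1 in H1 as [w Hw].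
    assert (E : INR m = INR N * IZR w).
    { apply (Rmult_eq_reg_l (2 * PI / INR N)); [|apply Rgt_not_eq, Rdiv_lt_0_compat; lra].
      replace (2 * PI / INR N * INR m) with (2 * PI * INR m / INR N) by (field; lra).
      rewrite Hw; field; lra. }
    rewrite !INR_IZR_INZ, <- mult_IZR in E; apply eq_IZR in E.
    exists (Z.to_nat w); nia.
  - intros [w ->]; rewrite root_unity_pow.
    replace (2 * PI * INR (N * w) / INR N) with (2 * PI * IZR (Z.of_nat w))
      by (rewrite mult_INR, <- INR_IZR_INZ; field; lra).
    apply cexp_2PI_int.
Qed.

Lemma root_unity_pow_inj (j j' : nat) : (j < N)%nat -> (j' < N)%nat ->
  (root_unity ^ j)%C = (root_unity ^ j')%C -> j = j'.
Proof.
  assert (Hlt : forall i i', (i < i' < N)%nat -> (root_unity ^ i)%C <> (root_unity ^ i')%C).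
  { intros i i' Hii E; replace i' with (i + (i' - i))%nat in E by lia.
    rewrite Cpow_add_r in E.
    assert (Hz : (root_unity ^ i)%C <> 0) by apply Cpow_nz, cexp_neq0.
    assert (E2 : (root_unity ^ (i' - i))%C = 1).
    { transitivity (/ root_unity ^ i * (root_unity ^ i * root_unity ^ (i' - i)))%C; [field; exact Hz|].
      rewrite <- E; field; exact Hz. }
    apply root_unity_pow_eq1 in E2 as [[|w] Hw]; nia. }
  intros Hj Hj' E; destruct (lt_eq_lt_dec j j') as [[H|H]|H]; auto;
    exfalso; [apply (Hlt j j')|apply (Hlt j' j)]; auto.
Qed.

Lemma Cconj_root_unity : (Cconj root_unity * root_unity)%C = 1.
Proof.
  unfold root_unity, cexp; simpl; rewrite exp_0.
  pose proof (sin2_cos2 (2 * PI / INR N)) as H; unfold Rsqr in H; apply C_ext; simpl; nra.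
Qed.

End RootOfUnity.

Section DFT.
Variables (Nm : nat) (chi : nat -> CC).
Let N := S Nm.
Let zeta := root_unity N.
Hypothesis Hper : forall k, chi (k + N)%nat = chi k.

Definition dft_coef (j : nat) : CC :=
  (/ INR N * sumC (fun r => chi r * zeta ^ (j * (N - r)))%C Nm)%C.

Lemma chi_mod (k : nat) : chi k = chi (k mod N).
Proof.
  rewrite (Nat.div_mod_eq k N) at 1; generalize (k / N)%nat; intros q.
  induction q as [|q IH]; [f_equal; lia|].
  replace (N * S q + k mod N)%nat with ((N * q + k mod N) + N)%nat by lia; rewrite Hper; exact IH.
Qed.

Lemma dft_inversion (k : nat) : sumC (fun j => dft_coef j * zeta ^ (j * k))%C Nm = chi k.
Proof.
  assert (HN : (0 < N)%nat) by (unfold N; lia).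
  assert (HNR : INR N <> 0) by (apply not_0_INR; lia).
  pose proof (Nat.div_mod_eq k N) as Hdiv; pose proof (Nat.mod_upper_bound k N ltac:(lia)) as Hmod.
  assert (Hswap : sumC (fun j => dft_coef j * zeta ^ (j * k))%C Nm =
    sumC (fun r => / INR N * chi r * sumC (fun j => (zeta ^ (k + (N - r))) ^ j)%C Nm)%C Nm).
  { unfold dft_coef.
    rewrite (sumC_ext _ (fun j => sumC (fun r => / INR N * chi r * (zeta ^ (k + (N - r))) ^ j) Nm)%C).
    - rewrite sum_n_switch; apply sumC_ext; intros r _; rewrite <- sumC_mult_l; reflexivity.
    - intros j _; rewrite <- Cmult_assoc, <- sumC_mult_r, <- sumC_mult_l; apply sumC_ext; intros r _.
      rewrite <- Cpow_mult_r, (Nat.mul_comm _ j), Nat.mul_add_distr_l, Cpow_add_r; ring. }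
  rewrite Hswap, (sumC_single _ (k mod N) Nm ltac:(unfold N in *; lia)).
  - replace (zeta ^ (k + (N - k mod N)))%C with (RtoC 1)
      by (symmetry; apply root_unity_pow_eq1; auto; exists (k / N + 1)%nat; lia).
    rewrite geom_sum_1, <- chi_mod; fold N; eq_CC; field; exact (fun E => HNR (RtoC_inj _ _ E)).
  - intros r Hr Hne; rewrite geom_sum_root; [eq_CC; ring| |].
    + intros E; apply root_unity_pow_eq1 in E as [w Hw]; auto; apply Hne.
      assert (r < N)%nat by (unfold N; lia).
      set (q := (k / N)%nat) in *; set (rho := (k mod N)%nat) in *.
      destruct (lt_eq_lt_dec w (q + 1)) as [[Hlt|Heq]|Hgt]; nia.
    + rewrite <- Cpow_mult_r; apply root_unity_pow_eq1; auto; exists (k + (N - r))%nat; unfold N; lia.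
Qed.

End DFT.

Lemma shift2_of_real_nodes (n : nat) (alpha chi : nat -> CC) (z lam : CC) :
  (Cconj z * z)%C = 1 -> lam <> 0 ->
  (forall k, sumC (fun j => alpha j * z ^ (j * k))%C n = chi k) ->
  (forall j, (j <= n)%nat -> alpha j <> 0 -> Im (lam * z ^ j) = 0) ->
  forall k, (chi (k + 2)%nat * chi O = chi 2%nat * chi k)%C.
Proof.
  intros Hz Hlam Hchi Hreal.
  set (c := (Cconj lam / lam)%C).
  assert (Hsq : forall j, (j <= n)%nat -> alpha j <> 0 -> (z ^ j * z ^ j)%C = c).
  { intros j Hj Ha; specialize (Hreal j Hj Ha).
    assert (Hconj : (lam * z ^ j)%C = Cconj (lam * z ^ j)%C)
      by (apply C_ext; [rewrite re_conj|rewrite im_conj, Hreal]; reflexivity || ring).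
    rewrite Cmult_conj, Cpow_conj in Hconj.
    unfold c; transitivity ((lam * z ^ j) * z ^ j / lam)%C; [field; exact Hlam|].
    rewrite Hconj; transitivity (Cconj lam * (Cconj z * z) ^ j / lam)%C;
      [rewrite Cpow_mult_l; field; exact Hlam|rewrite Hz, Cpow_1_l; field; exact Hlam]. }
  assert (Hshift : forall k, chi (k + 2)%nat = (c * chi k)%C).
  { intros k; rewrite <- !Hchi, <- sumC_mult_l; apply sumC_ext; intros j Hj.
    destruct (classic (alpha j = 0)) as [->|Ha]; [ring|].
    replace (j * (k + 2))%nat with (j * k + j + j)%nat by lia.
    rewrite !Cpow_add_r, <- (Hsq j Hj Ha); ring. }
  intros k; rewrite Hshift, (Hshift O : chi 2%nat = _); ring.
Qed.

(** * Case (2): point functionals with a non-real node are not continuous *)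

Lemma geometric_no_domination (A B rho rho' : R) :
  0 < A -> 0 <= B -> 0 <= rho < rho' -> ~ (forall n, A * rho' ^ n <= B * rho ^ n).
Proof.
  intros HA HB Hrho Hdom.
  set (th := rho / rho').
  assert (Hth : 0 <= th < 1).
  { unfold th; split; [apply Rdiv_le_0_compat; lra|].
    apply (Rmult_lt_reg_r rho'); [lra|]; unfold Rdiv; rewrite Rmult_assoc, Rinv_l by lra; lra. }
  destruct (pow_lt_1_zero th ltac:(rewrite Rabs_right; lra) (A / (B + 1))) as [n Hn];
    [apply Rdiv_lt_0_compat; lra|].
  specialize (Hn n (le_n n)); rewrite Rabs_right in Hn by (apply Rle_ge, pow_le; lra).
  specialize (Hdom n).
  assert (Hpow : rho ^ n = th ^ n * rho' ^ n)
    by (unfold th; rewrite <- Rpow_mult_distr; f_equal; field; lra).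
  assert (Hr'n : 0 < rho' ^ n) by (apply pow_lt; lra).
  assert (A <= B * th ^ n)
    by (apply (Rmult_le_reg_r (rho' ^ n)); [exact Hr'n|rewrite Hpow in Hdom; lra]).
  apply (Rmult_lt_compat_r (B + 1)) in Hn; [|lra].
  replace (A / (B + 1) * (B + 1)) with A in Hn by (field; lra).
  pose proof (pow_le th n (proj1 Hth)); nra.
Qed.

Lemma strip_separated_from_node (r m : R) : 0 < m ->
  exists (c : CC) (rho : R), 0 <= rho /\
    (forall w, Im w = m -> rho < Cmod (w - c)) /\
    (forall z, Cmod z <= r -> Rabs (Im z) < m / 2 -> Cmod (z - c) <= rho).
Proof.
  intros Hm.
  set (L := r ^ 2 / m + 1).
  assert (HL : m * L = r ^ 2 + m) by (unfold L; field; lra).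
  assert (HL0 : 0 < L)
    by (unfold L; assert (0 <= r ^ 2 / m) by (apply Rdiv_le_0_compat; [apply pow2_ge_0|lra]); lra).
  (* The centre is [-iL]; [m * L = r ^ 2 + m] gives [r ^ 2 + (m / 2 + L) ^ 2 < (m + L) ^ 2]. *)
  set (rho := sqrt (r ^ 2 + (m / 2 + L) ^ 2)).
  exists (0, - L)%R, rho; split; [apply sqrt_pos|split].
  - intros w Hw; apply Rlt_le_trans with (m + L).
    + unfold rho; rewrite <- (sqrt_pow2 (m + L)) by lra; apply sqrt_lt_1_alt.
      split; [pose proof (pow2_ge_0 r); pose proof (pow2_ge_0 (m / 2 + L)); lra|nra].
    + pose proof (abs_Im_le_Cmod (w - (0, - L)%R)%C) as H.
      replace (Im (w - (0, - L)%R)%C) with (m + L) in H by (simpl; unfold Im in Hw; rewrite Hw; ring).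
      pose proof (Rle_abs (m + L)); lra.
  - intros z Hz Him; unfold rho, Cmod; apply sqrt_le_1_alt; simpl.
    pose proof (re_le_Cmod z) as Hre; apply Rabs_def2 in Him; unfold Re, Im in *.
    assert (fst z * fst z <= r * r).
    { rewrite <- (Rabs_right (fst z * fst z)) by (apply Rle_ge, Rle_0_sqr).
      rewrite Rabs_mult; pose proof (Cmod_ge_0 z); apply Rmult_le_compat; try apply Rabs_pos; lra. }
    nra.
Qed.

Lemma ex_derive_C_poly (p : CC -> CC) (z : CC) : is_poly p -> @ex_derive C_AbsRing C_NormedModule p z.
Proof.
  intros [l Hl]; apply (ex_derive_ext (peval 0 l)); [intros; symmetry; apply Hl|].
  apply ex_derive_C_peval.
Qed.

Lemma no_cont_seminorm_nonreal_node (q : (R -> CC) -> R) (n js : nat) (w coef : nat -> CC) :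
  cont_seminormA q -> (js <= n)%nat -> 0 < Im (w js) -> coef js <> 0 ->
  (forall j, (j <= n)%nat -> j <> js -> w j <> w js) ->
  (forall p, is_poly p -> q (fun y => p (RtoC y)) = Cmod (sumC (fun j => coef j * p (w j))%C n)) ->
  False.
Proof.
  intros Hq Hjs Hm Hc Hdist Hform.
  set (m := Im (w js)) in *.
  destruct (proj2 Hq _ (nbhdR_strip (m / 2) ltac:(lra))) as [Kc [M [HKc [HKU [HM Hbound]]]]].
  destruct (compactC_bounded Kc HKc) as [r [Hr HKr]].
  destruct (strip_separated_from_node r m Hm) as [c [rho [Hrho [Hfar Hnear]]]].
  set (F := fun z => prodC (fun j => if Nat.eqb j js then RtoC 1 else (z - w j)%C) n).
  set (p := fun (k : nat) (z : CC) => (F z * (z - c) ^ k)%C).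
  assert (Hpoly : forall k, is_poly (p k)).
  { intros k; apply is_poly_mult; [|apply is_poly_pow, is_poly_sub_const].
    apply (is_poly_prodC (fun j z => if Nat.eqb j js then RtoC 1 else (z - w j)%C)); intros j.
    destruct (Nat.eqb j js); [apply is_poly_const|apply is_poly_sub_const]. }
  set (A := Cmod (coef js * F (w js))%C).
  assert (HA : 0 < A).
  { apply Cmod_gt_0, Cmult_neq_0; [exact Hc|apply prodC_neq0; intros j Hj].
    destruct (Nat.eqb j js) eqn:Ej; [apply C1_nz|apply Nat.eqb_neq in Ej].
    apply Cminus_eq_contra; intros E; apply (Hdist j Hj Ej); rewrite E; reflexivity. }
  assert (Hval : forall k, q (fun y => p k (RtoC y)) = A * Cmod (w js - c) ^ k).
  { intros k; rewrite (Hform _ (Hpoly k)), (sumC_single _ js n Hjs).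
    - unfold p, A; rewrite !Cmod_mult, Cmod_pow; ring.
    - intros j Hj Hne; unfold p, F; rewrite (prodC_eq0 _ n j Hj); [ring|].
      replace (Nat.eqb j js) with false by (symmetry; apply Nat.eqb_neq; exact Hne); ring. }
  set (BF := prodR (fun j => if Nat.eqb j js then 1 else r + Cmod (w j)) n).
  assert (HBF : 0 <= BF).
  { apply prodR_nonneg; intros j; destruct (Nat.eqb j js); [lra|pose proof (Cmod_ge_0 (w j)); lra]. }
  apply (geometric_no_domination A (M * BF) rho (Cmod (w js - c)) HA (Rmult_le_pos _ _ HM HBF)
    (conj Hrho (Hfar (w js) eq_refl))).
  intros k; rewrite <- Hval, Rmult_assoc; apply Hbound; [intros z _; apply ex_derive_C_poly, Hpoly|].
  intros z Hz; specialize (HKr z Hz); specialize (HKU z Hz); simpl in HKU.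
  unfold p; rewrite Cmod_mult, Cmod_pow; apply Rmult_le_compat; try apply Cmod_ge_0;
    [apply pow_le, Cmod_ge_0| |apply pow_incr; split; [apply Cmod_ge_0|apply Hnear; auto]].
  apply Cmod_prodC_le; intros j Hj; destruct (Nat.eqb j js); [rewrite Cmod_1; lra|].
  eapply Rle_trans; [apply Cmod_triangle|]; rewrite Cmod_opp; lra.
Qed.

Section Case2.
Variables (a : nat -> CC) (K : nat).
Hypothesis HK : (2 <= K)%nat.
Hypothesis HaK : a K <> 0.
Hypothesis Hq : forall j, (2 <= j <= K)%nat -> exists q : Q, a j = (0, Q2R q).

Let phase (t : R) (k : nat) : CC := cexp (0, t * Qpoly a K (INR k))%R.

Lemma phase_periodic (D : Z) (Nm : nat) :
  (forall w N : Z, exists m : Z,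
     IZR D * (Qpoly a K (IZR w + IZR N) - Qpoly a K (IZR w)) = IZR N * IZR m) ->
  forall k, phase (2 * PI * IZR D / INR (S Nm)) (k + S Nm)%nat = phase (2 * PI * IZR D / INR (S Nm)) k.
Proof.
  intros Hper k; unfold phase.
  assert (HN : 0 < INR (S Nm)) by (apply lt_0_INR; lia).
  destruct (Hper (Z.of_nat k) (Z.of_nat (S Nm))) as [m Hm]; rewrite <- !INR_IZR_INZ in Hm.
  rewrite plus_INR.
  replace (2 * PI * IZR D / INR (S Nm) * Qpoly a K (INR k + INR (S Nm)))
    with (2 * PI * IZR D / INR (S Nm) * Qpoly a K (INR k) + 2 * PI * IZR m).
  - replace (0, 2 * PI * IZR D / INR (S Nm) * Qpoly a K (INR k) + 2 * PI * IZR m)%R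
      with ((0, 2 * PI * IZR D / INR (S Nm) * Qpoly a K (INR k))%R + (0, 2 * PI * IZR m)%R)%C
      by (apply C_ext; simpl; ring).
    rewrite cexp_add, cexp_2PI_int; ring.
  - transitivity (2 * PI * IZR D / INR (S Nm) * Qpoly a K (INR k) +
      2 * PI / INR (S Nm) * (IZR D * (Qpoly a K (INR k + INR (S Nm)) - Qpoly a K (INR k))));
      [rewrite Hm; field; lra|field; lra].
Qed.

Lemma phase_multiplicative_inv (t : R) (n0 : nat) :
  (phase t (n0 + 2)%nat * phase t O = phase t 2%nat * phase t n0)%C ->
  exists w : Z, t * (Qpoly a K (INR n0 + 2) - Qpoly a K (INR n0) - Qpoly a K 2) = 2 * PI * IZR w.
Proof.
  unfold phase; rewrite plus_INR; change (INR 0) with 0; replace (INR 2) with 2 by (simpl; ring).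
  rewrite Qpoly_0 by assumption; intros Heq; apply cexp_eq_mult_inv in Heq.
  replace ((0, t * Qpoly a K (INR n0 + 2))%R + (0, t * 0)%R -
    (0, t * Qpoly a K 2)%R - (0, t * Qpoly a K (INR n0))%R)%C
    with (0, t * (Qpoly a K (INR n0 + 2) - Qpoly a K (INR n0) - Qpoly a K 2))%R in Heq
    by (apply C_ext; simpl; ring).
  exact (cexp_i_eq1 _ Heq).
Qed.

(* With [E := D * (Qpoly (n0 + 2) - Qpoly n0 - Qpoly 2)], a nonzero integer, the time
   [t := 2 PI D / (|E| + 1)] makes the phase periodic while [t * E / D = 2 PI E / (|E| + 1)]
   is not a multiple of [2 PI]. *)
Lemma phase_periodic_not_multiplicative : exists (t : R) (Nm n0 : nat), 0 < t /\
  (forall k, phase t (k + S Nm)%nat = phase t k) /\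
  (phase t (n0 + 2)%nat * phase t O <> phase t 2%nat * phase t n0)%C.
Proof.
  destruct (Qpoly_denominator a K HK Hq) as [D [HD [Hint Hper]]].
  destruct (Qpoly_not_additive a K HK HaK Hq) as [n0 Hn0].
  destruct (Hint (Z.of_nat n0 + 2)%Z) as [m1 Hm1].
  destruct (Hint (Z.of_nat n0)) as [m2 Hm2].
  destruct (Hint 2%Z) as [m3 Hm3].
  set (E := (m1 - m2 - m3)%Z).
  assert (HE : IZR D * (Qpoly a K (INR n0 + 2) - Qpoly a K (INR n0) - Qpoly a K 2) = IZR E).
  { unfold E; rewrite !minus_IZR, <- Hm1, <- Hm2, <- Hm3, plus_IZR, <- INR_IZR_INZ; ring. }
  assert (HDR : 0 < IZR D) by (apply IZR_lt; lia).
  assert (HE0 : E <> 0%Z).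
  { intros E0; rewrite E0 in HE; apply Hn0, (Rmult_eq_reg_l (IZR D)); [rewrite HE; ring|lra]. }
  set (Nm := Z.abs_nat E).
  assert (HN : 0 < INR (S Nm)) by (apply lt_0_INR; lia).
  pose proof PI_RGT_0.
  exists (2 * PI * IZR D / INR (S Nm)), Nm, n0.
  split; [apply Rdiv_lt_0_compat; nra|split; [apply phase_periodic, Hper|]].
  intros Heq; apply phase_multiplicative_inv in Heq as [w Hw].
  assert (Hw2 : IZR E = INR (S Nm) * IZR w).
  { rewrite <- HE; apply (Rmult_eq_reg_l (2 * PI / INR (S Nm)));
      [|apply Rgt_not_eq, Rdiv_lt_0_compat; lra].
    transitivity (2 * PI * IZR D / INR (S Nm) *
      (Qpoly a K (INR n0 + 2) - Qpoly a K (INR n0) - Qpoly a K 2)).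
    - field; lra.
    - rewrite Hw; field; lra. }
  rewrite INR_IZR_INZ, <- mult_IZR in Hw2; apply eq_IZR in Hw2.
  unfold Nm in Hw2; rewrite Nat2Z.inj_succ, Zabs2Nat.id_abs in Hw2.
  destruct (Z.eq_dec w 0) as [->|Hw0]; [lia|].
  assert (Habs : (Z.abs E = (Z.abs E + 1) * Z.abs w)%Z) by (rewrite Hw2 at 1; rewrite Z.abs_mul; lia).
  nia.
Qed.

Lemma cexp_Psymbol_nodes (t : R) (Nm : nat) (x0 : R) :
  (forall k, phase t (k + S Nm)%nat = phase t k) -> forall k,
  (cexp (t * Psymbol a K k) * RtoC x0 ^ k)%C =
  sumC (fun j => cexp (t * a O) * dft_coef Nm (phase t) j *
                 (cexp (t * a 1%nat) * root_unity (S Nm) ^ j * x0) ^ k)%C Nm.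
Proof.
  intros Hper k.
  assert (Hsym : cexp (t * Psymbol a K k) = (cexp (t * a O) * cexp (t * a 1%nat) ^ k * phase t k)%C).
  { rewrite Psymbol_split by assumption; unfold phase; rewrite <- cexp_natmul, <- !cexp_add.
    f_equal; apply C_ext; simpl; ring. }
  rewrite Hsym, <- (dft_inversion Nm (phase t) Hper k), <- !sumC_mult_l, <- sumC_mult_r.
  apply sumC_ext; intros j _; rewrite !Cpow_mult_l, <- Cpow_mult_r; ring.
Qed.

Lemma no_generator_imaginary_rational (T : R -> opA) :
  C0_semigroup T -> generates (Ptheta a K) T -> False.
Proof.
  intros HC HG.
  destruct phase_periodic_not_multiplicative as [t [Nm [n0 [Ht [Hper Hn0]]]]].
  set (zeta := root_unity (S Nm)); set (alpha := dft_coef Nm (phase t)).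
  set (lam := cexp (t * a 1%nat)); set (e0 := cexp (t * a O)).
  destruct (classic (exists js, (js <= Nm)%nat /\ alpha js <> 0 /\ Im (lam * zeta ^ js) <> 0))
    as [[js [Hjs [Hal Him]]]|Hreal].
  - set (x0 := if Rlt_dec 0 (Im (lam * zeta ^ js)) then 1 else -1).
    assert (Hx0 : 0 < x0 * Im (lam * zeta ^ js) /\ x0 <> 0).
    { unfold x0; destruct (Rlt_dec 0 (Im (lam * zeta ^ js))); split; lra. }
    apply (no_cont_seminorm_nonreal_node (fun f => Cmod (T t f x0)) Nm js
             (fun j => lam * zeta ^ j * x0)%C (fun j => e0 * alpha j)%C).
    + exact (cont_seminormA_comp _ (T_cont_linear T HC t ltac:(lra)) _ (cont_seminormA_eval x0)).
    + exact Hjs.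
    + rewrite im_scal_r, Rmult_comm; apply Hx0.
    + apply Cmult_neq_0; [apply cexp_neq0|exact Hal].
    + intros j Hj Hne E; apply Hne, (root_unity_pow_inj (S Nm)); try lia.
      assert (Hnz : RtoC x0 <> 0 /\ lam <> 0)
        by (split; [intros E0; apply RtoC_inj in E0; apply Hx0, E0|apply cexp_neq0]).
      assert (Hcancel : forall u v : CC, (lam * u * x0 = lam * v * x0)%C -> u = v).
      { intros u v Huv; transitivity (/ (lam * x0) * (lam * u * x0))%C; [field; exact Hnz|].
        rewrite Huv; field; exact Hnz. }
      exact (Hcancel _ _ E).
    + intros p [l Hl].
      replace (fun y => p (RtoC y)) with (fun y => peval 0 l (RtoC y))
        by (apply functional_extensionality; intros y; rewrite Hl; reflexivity).
      rewrite (T_peval_nodes _ (T_cont_linear T HC t ltac:(lra)) x0 Nm (fun j => e0 * alpha j)%C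
                (fun j => lam * zeta ^ j * x0)%C).
      * f_equal; apply sumC_ext; intros j _; rewrite Hl; reflexivity.
      * intros k; rewrite (T_monomial T a K HC HG) by lra; apply cexp_Psymbol_nodes, Hper.
  - apply Hn0, (shift2_of_real_nodes Nm alpha (phase t) zeta lam).
    + apply Cconj_root_unity.
    + apply cexp_neq0.
    + apply dft_inversion, Hper.
    + intros j Hj Ha; apply NNPP; intros Hi; apply Hreal; exists j; auto.
Qed.

End Case2.

Theorem mainTheorem7 (a : nat -> Complex.C) (K : nat) :
  (2 <= K)%nat -> a K <> RtoC 0 ->
  ((exists l : nat, (2 <= l <= K)%nat /\
      (forall j, (l < j <= K)%nat -> Re (a j) = 0) /\ 0 < Re (a l))
   \/
   (forall j, (2 <= j <= K)%nat -> exists q : Q, a j = (0, Q2R q))) ->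
  ~ exists T : R -> opA, C0_semigroup T /\ generates (Ptheta a K) T.
Proof.
  intros HK HaK [[l [Hl [Hz Hpos]]]|Hq] [T [HC HG]].
  - exact (no_generator_Re_dominant T a K l HC HG Hl Hz Hpos).
  - exact (no_generator_imaginary_rational a K HK HaK Hq T HC HG).
Qed.
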